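(* Let $f = c_1 \wedge c_2 \wedge \cdots \wedge c_m$ ($m \ge 1$) be a Boolean formula in conjunctive normal form, where each clause is $c_i = L_{i1} \vee L_{i2} \vee \cdots \vee L_{i n_i}$ with $n_i \ge 1$ and each $L_{i\mu}$ a literal (a propositional variable or its negation). Introduce one new Boolean variable (an ''indicator'') $\xi_{i\mu}$ for each position $(i,\mu)$, $1 \le i \le m$, $1 \le \mu \le n_i$. Define $$g = \bigwedge_{i=1}^{m} \left(\xi_{i1} \oplus \xi_{i2} \oplus \cdots \oplus \xi_{i n_i}\right),$$ where $\oplus$ denotes exclusive or. For $1 \le i < j \le m$ let $$B_{ij} = \{ (\xi_{i\mu}, \xi_{j\nu}) : 1 \le \mu \le n_i,\ 1 \le \nu \le n_j,\ L_{i\mu} = \overline{L_{j\nu}} \},$$ i.e. the pairs of indicators of positions in two distinct clauses carrying complementary literals, and define $$h = \bigwedge_{1 \le i < j \le m} \ \bigwedge_{(\xi,\zeta) \in B_{ij}} (\bar{\xi} \vee \bar{\zeta})$$ (an empty conjunction being $\mathit{true}$). Then $f$ is satisfiable (by some assignment of its original variables) if and only if $g \wedge h$ is satisfiable (by some assignment of the indicator variables $\xi_{i\mu}$).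
   Context: Literals $L$ and $\overline{L}$ denote a variable and its negation (in either order). The formula $g \wedge h$ is a formula solely in the indicator variables $\xi_{i\mu}$; the original variables of $f$ do not occur in it. A multi-argument exclusive or $\xi_{i1} \oplus \cdots \oplus \xi_{in_i}$ is true exactly when an odd number of its arguments are true. *)

From mathcomp Require Import all_boot.
Set Implicit Arguments. Unset Strict Implicit. Unset Printing Implicit Defensive.

(* A literal over variables of type V: (v, true) is v, (v, false) is the negation of v. *)
Definition literal (V : Type) := (V * bool)%type.

Definition lit_compl (V : Type) (l : literal V) : literal V := (l.1, ~~ l.2).

Definition lit_eval (V : Type) (a : V -> bool) (l : literal V) : bool :=
  if l.2 then a l.1 else ~~ a l.1.

(* CNF f = /\_{i<m} \/_{mu < n i} L i mu  (0-based indices). *)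
Definition cnf_eval (V : Type) (m : nat) (n : nat -> nat)
    (L : nat -> nat -> literal V) (a : V -> bool) : Prop :=
  forall i, i < m -> exists2 mu, mu < n i & lit_eval a (L i mu).

Definition cnf_satisfiable (V : Type) (m : nat) (n : nat -> nat)
    (L : nat -> nat -> literal V) : Prop :=
  exists a : V -> bool, cnf_eval m n L a.

Definition xor_row (xi : nat -> nat -> bool) (i k : nat) : bool :=
  \big[addb/false]_(mu < k) xi i mu.

Definition g_eval (m : nat) (n : nat -> nat) (xi : nat -> nat -> bool) : Prop :=
  forall i, i < m -> xor_row xi i (n i).

Definition h_eval (V : Type) (m : nat) (n : nat -> nat)
    (L : nat -> nat -> literal V) (xi : nat -> nat -> bool) : Prop :=
  forall i j mu nu, i < j -> j < m -> mu < n i -> nu < n j ->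
    L i mu = lit_compl (L j nu) -> ~~ xi i mu || ~~ xi j nu.

Definition gh_satisfiable (V : Type) (m : nat) (n : nat -> nat)
    (L : nat -> nat -> literal V) : Prop :=
  exists xi : nat -> nat -> bool, g_eval m n xi /\ h_eval m n L xi.

(* An indicator assignment xi satisfies g exactly when every clause has an odd
   (in particular nonzero) number of selected positions, and it satisfies h
   when no two selected positions in distinct clauses carry complementary
   literals.

   - From an assignment a satisfying f, select in each clause the first
     position whose literal is true under a.  Exactly one position per clause
     is selected, so g holds; all selected literals are true, so no two of
     them are complementary and h holds.
   - From indicators xi satisfying g and h, set a variable v true iff some
     selected position carries the positive literal v.  Every clause has a
     selected position; its literal is true under this a, unless it is the
     negation of a variable v made true by a selected positive occurrence of
     v, which by h must lie in the same clause and then satisfies it. *)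

From Stdlib Require Import ClassicalEpsilon.
From mathcomp Require Import all_boot.

Set Implicit Arguments. Unset Strict Implicit. Unset Printing Implicit Defensive.

Lemma lit_eval_compl (V : Type) (a : V -> bool) (l : literal V) :
  lit_eval a (lit_compl l) = ~~ lit_eval a l.
Proof. by case: l => v []; rewrite /lit_eval /= ?negbK. Qed.

Lemma xor_row_witness (xi : nat -> nat -> bool) (i k : nat) :
  xor_row xi i k -> exists2 mu, mu < k & xi i mu.
Proof.
elim: k => [|k IH]; rewrite /xor_row ?big_ord0 // big_ord_recr /=.
case Hk: (xi i k); first by move=> _; exists k.
by rewrite addbF => /IH [mu Hmu Hx]; exists mu => //; apply: ltnW.
Qed.

Lemma xor_row_single (s : nat -> nat) (i k : nat) :
  xor_row (fun i' mu => mu == s i') i k = (s i < k).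
Proof.
rewrite /xor_row; elim: k => [|k IH]; first by rewrite big_ord0.
rewrite big_ord_recr /= IH ltnS (eq_sym k).
by case: ltngtP.
Qed.

(* The first position below k satisfying p, or k if there is none. *)
Definition first_position (p : pred nat) (k : nat) : nat := find p (iota 0 k).

Lemma first_positionP (p : pred nat) (k : nat) :
  (exists2 mu, mu < k & p mu) ->
  first_position p k < k /\ p (first_position p k).
Proof.
case=> mu Hmu Hp.
have Hhas : has p (iota 0 k) by apply/hasP; exists mu; rewrite ?mem_iota.
have Hlt : first_position p k < k by rewrite -[k in _ < k](size_iota 0) -has_find.
by split=> //; move: (nth_find 0 Hhas); rewrite nth_iota.
Qed.

Lemma cnf_sat_gh_sat (V : Type) (m : nat) (n : nat -> nat)
    (L : nat -> nat -> literal V) :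
  cnf_satisfiable m n L -> gh_satisfiable m n L.
Proof.
case=> a Ha.
pose sel i := first_position (fun mu => lit_eval a (L i mu)) (n i).
have selP i : i < m -> sel i < n i /\ lit_eval a (L i (sel i)).
  by move=> Hi; apply: first_positionP; apply: Ha.
exists (fun i mu => mu == sel i); split.
  by move=> i Hi; rewrite xor_row_single; case: (selP i Hi).
move=> i j mu nu Hij Hjm _ _ HL; rewrite -negb_and.
apply/negP => /andP [/eqP Emu /eqP Enu].
have [_ Ti] := selP i (ltn_trans Hij Hjm).
have [_ Tj] := selP j Hjm.
by move: Ti; rewrite -Emu HL lit_eval_compl Enu Tj.
Qed.

Definition selected_positive (V : Type) (m : nat) (n : nat -> nat)
    (L : nat -> nat -> literal V) (xi : nat -> nat -> bool) (v : V) : Prop :=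
  exists i mu, [/\ i < m, mu < n i, xi i mu & L i mu = (v, true)].

Definition induced_assignment (V : Type) (m : nat) (n : nat -> nat)
    (L : nat -> nat -> literal V) (xi : nat -> nat -> bool) (v : V) : bool :=
  if excluded_middle_informative (selected_positive m n L xi v)
  then true else false.

Lemma induced_assignmentP (V : Type) (m : nat) (n : nat -> nat)
    (L : nat -> nat -> literal V) (xi : nat -> nat -> bool) (v : V) :
  reflect (selected_positive m n L xi v) (induced_assignment m n L xi v).
Proof.
by rewrite /induced_assignment; case: excluded_middle_informative => H;
  constructor.
Qed.

Lemma gh_sat_cnf_sat (V : Type) (m : nat) (n : nat -> nat)
    (L : nat -> nat -> literal V) :
  gh_satisfiable m n L -> cnf_satisfiable m n L.
Proof.
case=> xi [Hg Hh]; set a := induced_assignment m n L xi.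
exists a => i Hi.
have [mu Hmu Hx] := xor_row_witness (Hg i Hi).
case Emu: (L i mu) => [v []].
  by exists mu; rewrite // Emu /lit_eval /=; apply/induced_assignmentP;
    exists i, mu.
case Av: (a v); last by exists mu; rewrite // Emu /lit_eval /= Av.
(* v is made true by a selected positive occurrence at (j, nu); by h it lies
   in clause i, where it is a true literal. *)
have [j [nu [Hj Hnu Hxj Enu]]] := elimT (induced_assignmentP _ _ _ _ _) Av.
have Hcompl : L i mu = lit_compl (L j nu) by rewrite Emu Enu.
have Hcompl' : L j nu = lit_compl (L i mu) by rewrite Emu Enu.
case: (ltngtP i j) => Hij.
- by move: (Hh i j mu nu Hij Hj Hmu Hnu Hcompl); rewrite Hx Hxj.
- by move: (Hh j i nu mu Hij Hi Hnu Hmu Hcompl'); rewrite Hx Hxj.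
- by subst j; exists nu; rewrite // Enu /lit_eval /= Av.
Qed.

Theorem mainTheorem1 (V : Type) (m : nat) (n : nat -> nat)
    (L : nat -> nat -> literal V) :
  1 <= m -> (forall i, i < m -> 1 <= n i) ->
  cnf_satisfiable m n L <-> gh_satisfiable m n L.
Proof.
move=> _ _; split; [exact: cnf_sat_gh_sat | exact: gh_sat_cnf_sat].
Qed.
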